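(* Let $X$ be a first-countable well-filtered space such that $\min(K)$ is countable for every $K\in\mathsf{K}(X)$. Then the upper Vietoris topology and the Scott topology on $\mathsf{K}(X)$ coincide.
   Context: Spaces are $T_0$; specialization order $x\le y$ iff $x\in\overline{\{y\}}$; saturated = upper set. $\mathsf{K}(X)$ = nonempty compact saturated subsets ordered by reverse inclusion; $\min(K)$ is the set of minimal points of $K$ in the specialization order. Scott topology on a poset: upper sets $U$ such that every directed $D$ with existing supremum in $U$ meets $U$. Upper Vietoris topology on $\mathsf{K}(X)$: base $\Box U=\{K:K\subseteq U\}$, $U$ open. Well-filtered: for open $U$ and $\mathcal K\subseteq\mathsf{K}(X)$ filtered under inclusion, $\bigcap\mathcal K\subseteq U$ implies some $K\in\mathcal K$ lies in $U$. *)

From Stdlib Require Import List.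

Set Implicit Arguments.

Section Topology.
Variable X : Type.
Variable O : (X -> Prop) -> Prop.

Definition is_topology : Prop :=
  O (fun _ => True) /\
  (forall U V, O U -> O V -> O (fun x => U x /\ V x)) /\
  (forall F : (X -> Prop) -> Prop, (forall U, F U -> O U) ->
      O (fun x => exists U, F U /\ U x)).

Definition T0 : Prop :=
  forall x y, (forall U, O U -> (U x <-> U y)) -> x = y.

(* specialization order: x <= y iff x is in the closure of {y},
   i.e. every open set containing x contains y *)
Definition spec_le (x y : X) : Prop := forall U, O U -> U x -> U y.

Definition subset (A B : X -> Prop) : Prop := forall x, A x -> B x.

Definition saturated (K : X -> Prop) : Prop :=
  forall x y, K x -> spec_le x y -> K y.

Definition compact (K : X -> Prop) : Prop :=
  forall F : (X -> Prop) -> Prop,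
    (forall U, F U -> O U) ->
    (forall x, K x -> exists U, F U /\ U x) ->
    exists l : list (X -> Prop),
      (forall U, In U l -> F U) /\ (forall x, K x -> exists U, In U l /\ U x).

Definition isK (K : X -> Prop) : Prop :=
  (exists x, K x) /\ compact K /\ saturated K.

Definition first_countable : Prop :=
  forall x, exists B : nat -> (X -> Prop),
    (forall n, O (B n) /\ B n x) /\
    (forall U, O U -> U x -> exists n, subset (B n) U).

Definition filtered_incl (KK : (X -> Prop) -> Prop) : Prop :=
  (exists K, KK K) /\
  (forall K1 K2, KK K1 -> KK K2 ->
     exists K3, KK K3 /\ subset K3 K1 /\ subset K3 K2).

Definition well_filtered : Prop :=
  forall (U : X -> Prop) (KK : (X -> Prop) -> Prop),
    O U -> (forall K, KK K -> isK K) -> filtered_incl KK ->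
    subset (fun x => forall K, KK K -> K x) U ->
    exists K, KK K /\ subset K U.

Definition minset (K : X -> Prop) (x : X) : Prop :=
  K x /\ forall y, K y -> spec_le y x -> spec_le x y.

End Topology.

Definition countable_set (T : Type) (A : T -> Prop) : Prop :=
  exists g : T -> nat, forall x y, A x -> A y -> g x = g y -> x = y.

Definition KX (X : Type) (O : (X -> Prop) -> Prop) : Type :=
  { K : X -> Prop | isK O K }.

Definition KX_le (X : Type) (O : (X -> Prop) -> Prop) (A B : KX O) : Prop :=
  subset (proj1_sig B) (proj1_sig A).

(* Upper Vietoris topology: generated by the base Box U = {K | K ⊆ U}, U open *)
Definition upper_vietoris_open (X : Type) (O : (X -> Prop) -> Prop)
    (W : KX O -> Prop) : Prop :=
  forall K : KX O, W K ->
    exists U, O U /\ subset (proj1_sig K) U /\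
      (forall K' : KX O, subset (proj1_sig K') U -> W K').

Definition directed (T : Type) (le : T -> T -> Prop) (D : T -> Prop) : Prop :=
  (exists d, D d) /\
  (forall a b, D a -> D b -> exists c, D c /\ le a c /\ le b c).

Definition is_sup (T : Type) (le : T -> T -> Prop) (D : T -> Prop) (s : T) : Prop :=
  (forall d, D d -> le d s) /\
  (forall u, (forall d, D d -> le d u) -> le s u).

Definition scott_open (T : Type) (le : T -> T -> Prop) (W : T -> Prop) : Prop :=
  (forall x y, W x -> le x y -> W y) /\
  (forall D s, directed le D -> is_sup le D s -> W s -> exists d, D d /\ W d).

From Stdlib Require Import List Arith Lia Classical ClassicalEpsilon
  FunctionalExtensionality PropExtensionality Cantor.
From mathcomp Require classical_sets boolp.

(* Upper Vietoris open sets are Scott open in any well-filtered space: the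
   intersection of a directed family in K(X) is again in K(X) and is its
   supremum, so well-filteredness puts some member of the family inside any open
   set containing that supremum.

   Conversely, let W be Scott open and K in W.  Every point of K lies above one
   of the countably many minimal points of K, and these have countable
   neighbourhood bases; from them one builds open sets U_j containing K that are
   eventually inside every open set containing K.  If no box of U_j were
   contained in W, pick c_j in K(X) inside U_j and outside W.  The sets
   K u c_k u c_(k+1) u ... lie in K(X), decrease with k and have supremum K, so
   Scott openness puts one of them, hence also c_k, in W. *)

Lemma zorn_preorder {T : Type} (t0 : T) (R : T -> T -> Prop) :
  (forall t, R t t) -> (forall r s t, R r s -> R s t -> R r t) ->
  (forall A : T -> Prop, (forall s t, A s -> A t -> R s t \/ R t s) ->
      exists t, forall s, A s -> R s t) ->
  exists t, forall s, R t s -> R s t.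
Proof.
  intros Hrefl Htrans Hchain.
  assert (HR : forall a b, R a b <-> boolp.asbool (R a b) = true)
    by (intros a b; apply Bool.reflect_iff, boolp.asboolP).
  destruct (@classical_sets.ZL_preorder T t0 (fun a b => boolp.asbool (R a b)))
    as [t Hmax].
  - intro t; apply HR, Hrefl.
  - intros r s t Hrs Hst; apply HR; apply HR in Hrs, Hst; eauto.
  - intros A HA; destruct (Hchain A) as [t Ht].
    + intros s t Hs Ht; destruct (HA s t Hs Ht) as [H | H]; [left | right];
        apply HR; exact H.
    + exists t; intros s Hs; apply HR; auto.
  - exists t; intros s Hts; apply HR, Hmax, HR, Hts.
Qed.

Lemma chain_finite_lower_bound {T : Type} (R : T -> T -> Prop) (A : T -> Prop)
    (a0 : T) :
  (forall t, R t t) -> (forall r s t, R r s -> R s t -> R r t) -> A a0 ->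
  (forall s t, A s -> A t -> R s t \/ R t s) ->
  forall l : list T, (forall a, In a l -> A a) ->
  exists m, A m /\ forall a, In a l -> R m a.
Proof.
  intros Hrefl Htrans Aa0 Hchain l; induction l as [| a l IH]; intros Hl.
  - exists a0; split; [exact Aa0 | intros a []].
  - destruct IH as [m [Am Hm]]; [intros b Hb; apply Hl; right; exact Hb |].
    destruct (Hchain m a Am (Hl a (or_introl eq_refl))) as [Hma | Ham].
    + exists m; split; [exact Am |].
      intros b [<- | Hb]; auto.
    + exists a; split; [apply Hl; left; reflexivity |].
      intros b [<- | Hb]; [apply Hrefl | apply Htrans with m; auto].
Qed.

Section Topology.

Variable X : Type.
Variable O : (X -> Prop) -> Prop.
Hypothesis Htop : is_topology O.

Lemma spec_le_refl (x : X) : spec_le O x x.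
Proof. intros U _ Ux; exact Ux. Qed.

Lemma spec_le_trans {x y z : X} : spec_le O x y -> spec_le O y z -> spec_le O x z.
Proof. intros Hxy Hyz U HU Ux; apply Hyz, Hxy; assumption. Qed.

Lemma open_equiv (A B : X -> Prop) : O A -> (forall z, A z <-> B z) -> O B.
Proof.
  intros HA HAB; replace B with A; [exact HA |].
  apply functional_extensionality; intro z; apply propositional_extensionality, HAB.
Qed.

Lemma open_Union (I : Type) (V : I -> X -> Prop) :
  (forall i, O (V i)) -> O (fun z => exists i, V i z).
Proof.
  intros HV; destruct Htop as [_ [_ Hunion]].
  apply open_equiv with (fun z => exists U, (exists i, U = V i) /\ U z).
  - apply Hunion; intros U [i ->]; apply HV.
  - intro z; split.
    + intros [U [[i ->] Uz]]; exists i; exact Uz.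
    + intros [i Hz]; exists (V i); eauto.
Qed.

Lemma open_empty : O (fun _ => False).
Proof.
  apply open_equiv with (fun z => exists i : False, (fun _ : X => False) z).
  - apply open_Union; intros [].
  - intro z; split; [intros [[] _] | intros []].
Qed.

Lemma open_forall_le (V : nat -> X -> Prop) (j : nat) :
  (forall i, O (V i)) -> O (fun z => forall i, i <= j -> V i z).
Proof.
  intros HV; destruct Htop as [_ [Hinter _]]; induction j as [| j IH].
  - apply open_equiv with (V 0); [apply HV |].
    intro z; split; [intros Hz i Hi; replace i with 0 by lia; exact Hz | auto].
  - apply open_equiv with (fun z => (forall i, i <= j -> V i z) /\ V (S j) z).
    + apply Hinter; [exact IH | apply HV].
    + intro z; split.
      * intros [Hz HSj] i Hi.
        destruct (Nat.eq_dec i (S j)) as [-> | Hne]; [exact HSj | apply Hz; lia].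
      * intros Hz; split; auto.
Qed.

Lemma open_imp (P : Prop) (B : X -> Prop) : O B -> O (fun z => P -> B z).
Proof.
  intros HB; destruct (classic P) as [HP | HP].
  - apply open_equiv with B; [exact HB | tauto].
  - apply open_equiv with (fun _ => True); [apply Htop | tauto].
Qed.

Lemma open_not_below (c : X) : O (fun z => ~ spec_le O z c).
Proof.
  apply open_equiv with
    (fun z => exists U : {U : X -> Prop | O U /\ ~ U c}, proj1_sig U z).
  - apply open_Union; intro U; exact (proj1 (proj2_sig U)).
  - intro z; split.
    + intros [[U [HU Uc]] Uz] Hzc; apply Uc, Hzc; assumption.
    + intros Hzc; apply not_all_ex_not in Hzc as [U HU].
      apply imply_to_and in HU as [HU HUzc]; apply imply_to_and in HUzc as [Uz nUc].
      exists (exist _ U (conj HU nUc)); exact Uz.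
Qed.

Lemma compact_indexed (K : X -> Prop) (I : Type) (V : I -> X -> Prop) :
  compact O K -> (forall i, O (V i)) -> (forall x, K x -> exists i, V i x) ->
  exists l : list I, forall x, K x -> exists i, In i l /\ V i x.
Proof.
  intros HK HV Hcov.
  destruct (HK (fun U => exists i, U = V i)) as [l [Hl Hlcov]].
  - intros U [i ->]; apply HV.
  - intros x Kx; destruct (Hcov x Kx) as [i Hi]; eauto.
  - assert (Hidx : exists li : list I,
               forall U, In U l -> exists i, In i li /\ U = V i).
    { clear Hlcov; induction l as [| U l IH].
      - exists nil; intros U [].
      - destruct IH as [li Hli]; [intros U' HU'; apply Hl; right; exact HU' |].
        destruct (Hl U (or_introl eq_refl)) as [i ->].
        exists (i :: li); intros U' [<- | HU'].
        + exists i; split; [left |]; reflexivity.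
        + destruct (Hli U' HU') as [i' [Hi' ->]]; exists i'; split; [right |]; auto. }
    destruct Hidx as [li Hli]; exists li; intros x Kx.
    destruct (Hlcov x Kx) as [U [HU Ux]]; destruct (Hli U HU) as [i [Hi ->]]; eauto.
Qed.

Lemma compact_union (A B : X -> Prop) :
  compact O A -> compact O B -> compact O (fun z => A z \/ B z).
Proof.
  intros HA HB F HF Hcov.
  destruct (HA F HF (fun z Az => Hcov z (or_introl Az))) as [l1 [Hl1 Hc1]].
  destruct (HB F HF (fun z Bz => Hcov z (or_intror Bz))) as [l2 [Hl2 Hc2]].
  exists (l1 ++ l2); split.
  - intros U HU; apply in_app_or in HU as [HU | HU]; auto.
  - intros z [Az | Bz];
      [destruct (Hc1 z Az) as [U [HU Uz]] | destruct (Hc2 z Bz) as [U [HU Uz]]];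
      exists U; split; auto; apply in_or_app; auto.
Qed.

Lemma compact_finite_Union (c : nat -> X -> Prop) (N : nat) :
  (forall j, compact O (c j)) -> compact O (fun z => exists j, j < N /\ c j z).
Proof.
  intros Hc; induction N as [| N IH].
  - intros F _ _; exists nil; split; [intros U [] | intros z [j [Hj _]]; lia].
  - intros F HF Hcov.
    destruct (compact_union _ _ IH (Hc N) F HF) as [l [Hl Hlcov]].
    + intros z [[j [Hj cjz]] | cNz]; apply Hcov; [exists j | exists N]; split; auto.
    + exists l; split; [exact Hl |].
      intros z [j [Hj cjz]]; apply Hlcov.
      destruct (Nat.eq_dec j N) as [-> | Hne];
        [right; exact cjz | left; exists j; split; [lia | exact cjz]].
Qed.

Lemma well_filtered_inter_isK (KK : (X -> Prop) -> Prop) :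
  well_filtered O -> (forall K, KK K -> isK O K) -> filtered_incl KK ->
  isK O (fun z => forall K, KK K -> K z).
Proof.
  intros Hwf HKK Hfilt; split; [| split].
  - apply NNPP; intro Hempty.
    destruct (Hwf (fun _ => False) KK open_empty HKK Hfilt) as [K [HK HKempty]].
    + intros z Hz; apply Hempty; exists z; exact Hz.
    + destruct (HKK K HK) as [[z Kz] _]; exact (HKempty z Kz).
  - intros F HF Hcov.
    destruct (Hwf _ KK (proj2 (proj2 Htop) F HF) HKK Hfilt Hcov) as [K [HK HKV]].
    destruct (proj1 (proj2 (HKK K HK)) F HF HKV) as [l [Hl Hlcov]].
    exists l; split; [exact Hl | intros z Iz; exact (Hlcov z (Iz K HK))].
  - intros z y Iz Hzy K HK; exact (proj2 (proj2 (HKK K HK)) z y (Iz K HK) Hzy).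
Qed.

Lemma upper_vietoris_scott_open (W : KX O -> Prop) :
  well_filtered O -> upper_vietoris_open (O:=O) W -> scott_open (KX_le (O:=O)) W.
Proof.
  intros Hwf HW; split.
  - intros a b Wa Hab; destruct (HW a Wa) as [U [_ [HaU HboxU]]].
    apply HboxU; intros z bz; apply HaU, Hab, bz.
  - intros D s [[d0 Dd0] Hdir] [_ Hlub] Ws.
    destruct (HW s Ws) as [U [HU [HsU HboxU]]].
    set (KK := fun K : X -> Prop => exists d, D d /\ K = proj1_sig d).
    assert (HKK : forall K, KK K -> isK O K) by (intros K [d [_ ->]]; exact (proj2_sig d)).
    assert (Hfilt : filtered_incl KK).
    { split; [exists (proj1_sig d0), d0; auto |].
      intros K1 K2 [d1 [D1 ->]] [d2 [D2 ->]].
      destruct (Hdir d1 d2 D1 D2) as [d3 [D3 [H1 H2]]].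
      exists (proj1_sig d3); split; [exists d3; auto | auto]. }
    set (I := exist (isK O) _ (well_filtered_inter_isK KK Hwf HKK Hfilt) : KX O).
    assert (HsI : KX_le s I) by (apply Hlub; intros d Dd z Iz; apply Iz; exists d; auto).
    assert (HIU : subset (proj1_sig I) U) by (intros z Iz; apply HsU, HsI, Iz).
    destruct (Hwf U KK HU HKK Hfilt HIU) as [K [[d [Dd ->]] HdU]].
    exists d; split; [exact Dd | apply HboxU, HdU].
Qed.

Definition converges_upper (c : nat -> X -> Prop) (K : X -> Prop) : Prop :=
  forall V, O V -> subset K V -> exists J, forall j, J <= j -> subset (c j) V.

Definition tail_union (K : X -> Prop) (c : nat -> X -> Prop) (k : nat) (z : X) : Prop :=
  K z \/ exists j, k <= j /\ c j z.

Lemma tail_union_compact (K : X -> Prop) (c : nat -> X -> Prop) (k : nat) :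
  compact O K -> (forall j, compact O (c j)) -> converges_upper c K ->
  compact O (tail_union K c k).
Proof.
  intros HK Hc Hconv F HF Hcov.
  destruct (HK F HF (fun z Kz => Hcov z (or_introl Kz))) as [l1 [Hl1 Hc1]].
  set (V := fun z => exists U, In U l1 /\ U z).
  assert (HV : O V) by (apply (proj2 (proj2 Htop)); auto).
  destruct (Hconv V HV Hc1) as [J HJ].
  destruct (compact_finite_Union (fun i => c (k + i)) J (fun i => Hc (k + i)) F HF)
    as [l2 [Hl2 Hc2]].
  { intros z [i [_ Hz]]; apply Hcov; right; exists (k + i); split; [lia | exact Hz]. }
  exists (l1 ++ l2); split.
  - intros U HU; apply in_app_or in HU as [HU | HU]; auto.
  - intros z Hz.
    assert (Hz' : V z \/ exists i, i < J /\ c (k + i) z).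
    { destruct Hz as [Kz | [j [Hkj cjz]]]; [left; apply Hc1, Kz |].
      destruct (le_lt_dec (k + J) j) as [Hj | Hj].
      - left; apply (HJ j); [lia | exact cjz].
      - right; exists (j - k); split; [lia |].
        replace (k + (j - k)) with j by lia; exact cjz. }
    destruct Hz' as [[U [HU Uz]] | Hz']; [| destruct (Hc2 z Hz') as [U [HU Uz]]];
      exists U; split; auto; apply in_or_app; auto.
Qed.

Lemma tail_union_isK (K : X -> Prop) (c : nat -> X -> Prop) (k : nat) :
  isK O K -> (forall j, isK O (c j)) -> converges_upper c K ->
  isK O (tail_union K c k).
Proof.
  intros [[x Kx] [HKc HKs]] Hc Hconv; split; [| split].
  - exists x; left; exact Kx.
  - apply tail_union_compact; auto; intro j; apply (Hc j).
  - intros z y [Kz | [j [Hj cjz]]] Hzy.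
    + left; exact (HKs z y Kz Hzy).
    + right; exists j; split; [exact Hj | exact (proj2 (proj2 (Hc j)) z y cjz Hzy)].
Qed.

Lemma tail_union_inter (K : X -> Prop) (c : nat -> X -> Prop) (z : X) :
  saturated O K -> converges_upper c K -> (forall k, tail_union K c k z) -> K z.
Proof.
  intros HKs Hconv Hz; apply NNPP; intro nKz.
  destruct (Hconv (fun w => ~ spec_le O w z) (open_not_below z)) as [J HJ].
  - intros w Kw Hwz; exact (nKz (HKs w z Kw Hwz)).
  - destruct (Hz J) as [Kz | [j [Hj cjz]]]; [contradiction |].
    exact (HJ j Hj z cjz (spec_le_refl z)).
Qed.

Lemma scott_open_converging (W : KX O -> Prop) (K : KX O) (c : nat -> KX O) :
  scott_open (KX_le (O:=O)) W -> W K ->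
  converges_upper (fun j => proj1_sig (c j)) (proj1_sig K) -> exists k, W (c k).
Proof.
  intros [Wup Wscott] WK Hconv.
  set (L := fun k => exist (isK O) (tail_union (proj1_sig K) (fun j => proj1_sig (c j)) k)
                       (tail_union_isK _ _ k (proj2_sig K) (fun j => proj2_sig (c j)) Hconv)
                     : KX O).
  destruct (Wscott (fun d => exists k, d = L k) K) as [d [[k ->] WLk]].
  - split; [exists (L 0), 0; reflexivity |].
    intros a b [ka ->] [kb ->]; exists (L (Nat.max ka kb)); split; [eexists; reflexivity |].
    split; intros z [Kz | [j [Hj cjz]]];
      solve [left; exact Kz | right; exists j; split; [lia | exact cjz]].
  - split.
    + intros d [k ->] z Kz; left; exact Kz.
    + intros u Hu z uz.
      apply (tail_union_inter _ _ z (proj2 (proj2 (proj2_sig K))) Hconv).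
      intro k; exact (Hu (L k) (ex_intro _ k eq_refl) z uz).
  - exact WK.
  - exists k; apply (Wup (L k)); [exact WLk |].
    intros z cz; right; exists k; split; [lia | exact cz].
Qed.

Definition local_base (B : nat -> X -> Prop) (K : X -> Prop) : Prop :=
  (forall n, O (B n)) /\
  forall V, O V -> subset K V -> forall x, K x -> exists n, B n x /\ subset (B n) V.

Definition approx_nbhd (B : nat -> X -> Prop) (K : X -> Prop) (j : nat) (z : X) : Prop :=
  exists x, K x /\ forall n, n <= j -> B n x -> B n z.

Lemma approx_nbhd_open (B : nat -> X -> Prop) (K : X -> Prop) (j : nat) :
  (forall n, O (B n)) -> O (approx_nbhd B K j).
Proof.
  intros HB.
  apply open_equiv with
    (fun z => exists x : {x | K x}, forall n, n <= j -> B n (proj1_sig x) -> B n z).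
  - apply open_Union; intro x; apply open_forall_le; intro n; apply open_imp, HB.
  - intro z; split.
    + intros [[x Kx] Hz]; exists x; auto.
    + intros [x [Kx Hz]]; exists (exist _ x Kx); exact Hz.
Qed.

Lemma approx_nbhd_sup (B : nat -> X -> Prop) (K : X -> Prop) (j : nat) :
  subset K (approx_nbhd B K j).
Proof. intros x Kx; exists x; split; auto. Qed.

(* A finite cover of K by basic sets inside V lies in V, and so does U_j as soon
   as j bounds the indices of that cover. *)
Lemma approx_nbhd_converges (B : nat -> X -> Prop) (K : X -> Prop) :
  compact O K -> local_base B K -> converges_upper (approx_nbhd B K) K.
Proof.
  intros HK [HBo HB] V HV HKV.
  destruct (compact_indexed K _ (fun n : {n : nat | subset (B n) V} => B (proj1_sig n)) HK)
    as [l Hl].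
  - intro n; apply HBo.
  - intros x Kx; destruct (HB V HV HKV x Kx) as [n [Bnx HnV]].
    exists (exist _ n HnV); exact Bnx.
  - set (J := list_max (map (@proj1_sig _ _) l)).
    exists J; intros j Hj z [x [Kx Hz]].
    destruct (Hl x Kx) as [[n HnV] [Hn Bnx]]; apply HnV, Hz; [| exact Bnx].
    assert (HlJ : Forall (fun k => k <= J) (map (@proj1_sig _ _) l))
      by apply list_max_le, le_n.
    enough (n <= J) by lia.
    exact (proj1 (Forall_forall _ _) HlJ n (in_map (@proj1_sig _ _) l _ Hn)).
Qed.

Lemma compact_chain_lower_bound (K A : X -> Prop) (a0 : X) :
  compact O K -> subset A K -> A a0 ->
  (forall a b, A a -> A b -> spec_le O a b \/ spec_le O b a) ->
  exists y, K y /\ forall a, A a -> spec_le O y a.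
Proof.
  intros HK HAK Aa0 Hchain; apply NNPP; intro Hno.
  destruct (compact_indexed K _
              (fun (a : {a | A a}) z => ~ spec_le O z (proj1_sig a)) HK) as [l Hl].
  - intro a; apply open_not_below.
  - intros y Ky; apply NNPP; intro Hy; apply Hno; exists y; split; [exact Ky |].
    intros a Aa; apply NNPP; intro Hya; apply Hy; exists (exist _ a Aa); exact Hya.
  - destruct (chain_finite_lower_bound (spec_le O) A a0 spec_le_refl
                (@spec_le_trans) Aa0 Hchain (map (@proj1_sig _ _) l)) as [m [Am Hm]].
    + intros a Ha; apply in_map_iff in Ha as [[b Ab] [<- _]]; exact Ab.
    + destruct (Hl m (HAK m Am)) as [a [Ha nma]].
      apply nma, Hm, in_map, Ha.
Qed.

Lemma compact_minimal_below (K : X -> Prop) (x : X) :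
  compact O K -> K x -> exists y, minset O K y /\ spec_le O y x.
Proof.
  intros HK Kx.
  set (T := {y : X | K y /\ spec_le O y x}).
  set (t0 := exist _ x (conj Kx (spec_le_refl x)) : T).
  destruct (zorn_preorder t0 (fun a b : T => spec_le O (proj1_sig b) (proj1_sig a)))
    as [[y [Ky Hyx]] Hmax].
  - intro t; apply spec_le_refl.
  - intros r s t Hrs Hst; exact (spec_le_trans Hst Hrs).
  - intros A HA; destruct (classic (exists s, A s)) as [[s0 As0] | Hempty].
    + destruct (compact_chain_lower_bound K (fun z => exists s : T, A s /\ proj1_sig s = z)
                  (proj1_sig s0) HK) as [y [Ky Hy]].
      * intros z [s [_ <-]]; exact (proj1 (proj2_sig s)).
      * eauto.
      * intros a b [s [As <-]] [t [At <-]]; destruct (HA s t As At); auto.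
      * assert (Hys : forall s, A s -> spec_le O y (proj1_sig s))
          by (intros s As; apply Hy; eauto).
        exists (exist _ y (conj Ky (spec_le_trans (Hys s0 As0) (proj2 (proj2_sig s0))))).
        exact Hys.
    + exists t0; intros s As; exfalso; eauto.
  - exists y; split; [split; [exact Ky |] | exact Hyx].
    intros z Kz Hzy; exact (Hmax (exist _ z (conj Kz (spec_le_trans Hzy Hyx))) Hzy).
Qed.

Lemma minset_enumeration (K : X -> Prop) :
  isK O K -> countable_set (minset O K) ->
  exists e : nat -> X, (forall n, K (e n)) /\ forall x, K x -> exists n, spec_le O (e n) x.
Proof.
  intros [[x0 Kx0] [HKc _]] [g Hg].
  destruct (compact_minimal_below K x0 HKc Kx0) as [m0 [Mm0 _]].
  destruct (choice (fun n y => minset O K y /\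
                     ((exists y', minset O K y' /\ g y' = n) -> g y = n))) as [e He].
  - intro n; destruct (classic (exists y', minset O K y' /\ g y' = n)) as [[y' Hy'] | Hn].
    + exists y'; split; [apply Hy' | intros _; apply Hy'].
    + exists m0; split; [exact Mm0 | intro H; contradiction].
  - exists e; split; [intro n; exact (proj1 (proj1 (He n))) |].
    intros x Kx; destruct (compact_minimal_below K x HKc Kx) as [y [My Hyx]].
    exists (g y); replace (e (g y)) with y; [exact Hyx |].
    destruct (He (g y)) as [Me Hge].
    apply Hg; [exact My | exact Me | symmetry; apply Hge; eauto].
Qed.

Lemma first_countable_local_base (K : X -> Prop) (e : nat -> X) :
  first_countable O -> (forall n, K (e n)) ->
  (forall x, K x -> exists n, spec_le O (e n) x) -> exists B, local_base B K.
Proof.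
  intros Hfc Ke He.
  destruct (choice (fun x (Bx : nat -> X -> Prop) =>
              (forall m, O (Bx m) /\ Bx m x) /\
              forall U, O U -> U x -> exists m, subset (Bx m) U) Hfc) as [Bs HBs].
  exists (fun p => Bs (e (fst (of_nat p))) (snd (of_nat p))); split.
  - intro p; apply HBs.
  - intros V HV HKV x Kx; destruct (He x Kx) as [i Hix].
    destruct (proj2 (HBs (e i)) V HV (HKV _ (Ke i))) as [m Hm].
    destruct (proj1 (HBs (e i)) m) as [Hopen Hin].
    exists (to_nat (i, m)); rewrite cancel_of_to.
    split; [exact (Hix _ Hopen Hin) | exact Hm].
Qed.

Lemma countable_min_nbhd_sequence (K : X -> Prop) :
  first_countable O -> isK O K -> countable_set (minset O K) ->
  exists U : nat -> X -> Prop, (forall j, O (U j) /\ subset K (U j)) /\ converges_upper U K.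
Proof.
  intros Hfc HK Hmin.
  destruct (minset_enumeration K HK Hmin) as [e [Ke He]].
  destruct (first_countable_local_base K e Hfc Ke He) as [B HB].
  exists (approx_nbhd B K); split.
  - intro j; split; [apply approx_nbhd_open, HB | apply approx_nbhd_sup].
  - apply approx_nbhd_converges; [apply HK | exact HB].
Qed.

Lemma scott_open_upper_vietoris (W : KX O -> Prop) :
  first_countable O -> (forall K : KX O, countable_set (minset O (proj1_sig K))) ->
  scott_open (KX_le (O:=O)) W -> upper_vietoris_open (O:=O) W.
Proof.
  intros Hfc Hmin HW K WK; apply NNPP; intro Hno.
  destruct (countable_min_nbhd_sequence (proj1_sig K) Hfc (proj2_sig K) (Hmin K))
    as [U [HU Hconv]].
  destruct (choice (fun j (c : KX O) => subset (proj1_sig c) (U j) /\ ~ W c)) as [c Hc].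
  - intro j; apply NNPP; intro Hj; apply Hno.
    exists (U j); split; [apply HU | split; [apply HU |]].
    intros K' HK'; apply NNPP; intro nWK'; apply Hj; exists K'; split; assumption.
  - destruct (scott_open_converging W K c HW WK) as [k Wck].
    + intros V HV HKV; destruct (Hconv V HV HKV) as [J HJ].
      exists J; intros j Hj z cjz; apply (HJ j Hj), (proj1 (Hc j)), cjz.
    + exact (proj2 (Hc k) Wck).
Qed.

End Topology.

Theorem mainTheorem11 (X : Type) (O : (X -> Prop) -> Prop)
  (Htop : is_topology O) (HT0 : T0 O)
  (Hfc : first_countable O) (Hwf : well_filtered O)
  (Hmin : forall K : KX O, countable_set (minset O (proj1_sig K))) :
  forall W : KX O -> Prop,
    upper_vietoris_open (O:=O) W <-> scott_open (KX_le (O:=O)) W.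
Proof.
  intros W; split.
  - apply upper_vietoris_scott_open; assumption.
  - apply scott_open_upper_vietoris; assumption.
Qed.
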